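(* In the $n$-manager setting described in the context, fix $i$ and suppose all managers $j\neq i$ invest according to constant (deterministic, time-independent) strategies $\pi^j\in\mathbb{R}$, and that the forward relative performance $U^i$ of manager $i$ has constant local risk tolerance $r^i(x,t):=-U^i_x(x,t)/U^i_{xx}(x,t)\equiv r^i$. Then the best-response strategy \[ \pi^{i,*}_t=\frac{1}{\nu_i^2+\sigma_i^2}\Big(\theta_i\sigma_i\overline{(\pi\sigma)}^{(-i)}_t-\mu_i\frac{U^i_x(\widehat X^{i,*}_t,t)}{U^i_{xx}(\widehat X^{i,*}_t,t)}\Big) \] is constant in time.
   Context: Market: independent Brownian motions $B,W^1,\dots,W^n$; stock $i$ satisfies $dS^i_t/S^i_t=\mu_i dt+\nu_i dW^i_t+\sigma_i dB_t$ with constants $\mu_i>0$, $\sigma_i,\nu_i\ge0$, $\sigma_i+\nu_i>0$. Manager $i$ invests amount $\pi^i$ in stock $i$, wealth $dX^i_t=\pi^i_t(\mu_i dt+\nu_i dW^i_t+\sigma_i dB_t)$, competition weight $\theta_i\in[0,1]$, relative performance metric $\widehat X^i=X^i-\theta_i\frac1{n-1}\sum_{k\ne i}X^k$; $\widehat X^{i,*}$ denotes this metric when $i$ uses $\pi^{i,*}$. $\overline{(\pi\sigma)}^{(-i)}_t=\frac1{n-1}\sum_{k\neq i}\pi^k_t\sigma_k$. $U^i(x,t)$ is a smooth forward relative performance for manager $i$ (a random field, a.s. strictly increasing and strictly concave in $x$, such that $U^i(\widehat X^i_t,t)$ is a local supermartingale for all admissible $\pi^i$ and a local martingale for the optimal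 one), with $dU^i(x,t)=U^i_t(x,t)dt$. *)

From mathcomp Require Import all_boot all_order all_algebra.
From mathcomp Require Import all_classical all_reals all_analysis.
Set Implicit Arguments. Unset Strict Implicit. Unset Printing Implicit Defensive.
Import Order.TTheory GRing.Theory Num.Theory.
Local Open Scope ring_scope.

(* A random field U : Omega -> R -> R -> R, U w x t = U^i(x,t)(w). *)
Definition Ux {R : realType} {Omega : Type} (U : Omega -> R -> R -> R)
  (w : Omega) (x t : R) : R := derive1 (fun y => U w y t) x.

Definition Uxx {R : realType} {Omega : Type} (U : Omega -> R -> R -> R)
  (w : Omega) (x t : R) : R := derive1 (fun y => Ux U w y t) x.

Definition risk_tolerance {R : realType} {Omega : Type} (U : Omega -> R -> R -> R)
  (w : Omega) (x t : R) : R := - (Ux U w x t / Uxx U w x t).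

Definition avg_pisigma_others {R : realType} (n : nat) (i : 'I_n)
  (pi sigma : 'I_n -> R) : R :=
  (n.-1)%:R^-1 * \sum_(k < n | k != i) pi k * sigma k.

(* The best-response strategy of manager i at time t in scenario w,
   given the optimal relative performance metric Xhat (t, w) |-> Xhat^{i,*}_t(w). *)
Definition best_response {R : realType} {Omega : Type} (n : nat) (i : 'I_n)
  (mu nu sigma theta pi : 'I_n -> R) (U : Omega -> R -> R -> R)
  (Xhat : R -> Omega -> R) (t : R) (w : Omega) : R :=
  (nu i ^+ 2 + sigma i ^+ 2)^-1 *
  (theta i * sigma i * avg_pisigma_others i pi sigma
   - mu i * (Ux U w (Xhat t w) t / Uxx U w (Xhat t w) t)).

From mathcomp Require Import all_boot all_order all_algebra.
From mathcomp Require Import all_classical all_reals all_analysis.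
Import Order.TTheory GRing.Theory Num.Theory.
Local Open Scope ring_scope.

(* The best response sees the utility only through U_x / U_xx, which is the
   constant -r. *)

Lemma best_response_risk_toleranceE {R : realType} {Omega : Type} (n : nat)
    (i : 'I_n) (mu nu sigma theta pi : 'I_n -> R) (U : Omega -> R -> R -> R)
    (Xhat : R -> Omega -> R) (t : R) (w : Omega) :
  best_response i mu nu sigma theta pi U Xhat t w =
  (nu i ^+ 2 + sigma i ^+ 2)^-1 *
  (theta i * sigma i * avg_pisigma_others i pi sigma
   + mu i * risk_tolerance U w (Xhat t w) t).
Proof. by rewrite /best_response /risk_tolerance mulrN. Qed.

Theorem corollary1 (R : realType) (Omega : Type) (n : nat) (i : 'I_n)
  (mu nu sigma theta : 'I_n -> R)
  (pi : 'I_n -> R) (* constant strategies of the managers j <> i *)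
  (U : Omega -> R -> R -> R) (Xhat : R -> Omega -> R) (r : R) :
  (1 < n)%N ->
  (forall k, 0 < mu k) -> (forall k, 0 <= sigma k) -> (forall k, 0 <= nu k) ->
  (forall k, 0 < sigma k + nu k) -> (forall k, 0 <= theta k <= 1) ->
  (* smoothness in x *)
  (forall w x t, derivable (fun y => U w y t) x 1) ->
  (forall w x t, derivable (fun y => Ux U w y t) x 1) ->
  (* strictly increasing and strictly concave in x *)
  (forall w t x y, x < y -> U w x t < U w y t) ->
  (forall w t x y (l : R), x < y -> 0 < l < 1 ->
     l * U w x t + (1 - l) * U w y t < U w (l * x + (1 - l) * y) t) ->
  (* the local risk tolerance is well defined and constant *)
  (forall w x t, Uxx U w x t != 0) ->
  (forall w x t, risk_tolerance U w x t = r) ->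
  exists c : R, forall (t : R) (w : Omega),
    best_response i mu nu sigma theta pi U Xhat t w = c.
Proof.
move=> _ _ _ _ _ _ _ _ _ _ _ r_const.
exists ((nu i ^+ 2 + sigma i ^+ 2)^-1 *
        (theta i * sigma i * avg_pisigma_others i pi sigma + mu i * r)).
by move=> t w; rewrite best_response_risk_toleranceE r_const.
Qed.
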